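(* Let $\Lambda\in\mathbb{H}^{\mathbb{Z}}$ satisfy $\sum_n(1+|\Lambda_n|^2)^{-1}<\infty$, and assume $\Lambda$ is generic, i.e. $\Lambda_ni\bar\Lambda_n\neq\Lambda_mi\bar\Lambda_m$ for all $n\neq m$. Then $G_\Lambda$ acts freely on $N_\Lambda=\{x\in M_\Lambda: x_ni\bar x_n-\Lambda_ni\bar\Lambda_n\text{ is independent of }n\}$.
   Context: $\mathbb{H}$ denotes the quaternions, and $S^1\subset\mathbb{C}\subset\mathbb{H}$. $M$ is the space of square-summable sequences in $\mathbb{H}^{\mathbb{Z}}$, and $M_\Lambda=\Lambda+M$. $G_\Lambda=\{g\in(S^1)^{\mathbb{Z}}:\sum_n(1+|\Lambda_n|^2)|1-g_n|^2<\infty,\ \prod_ng_n=1\}$; the product converges under this summability condition. $G_\Lambda$ acts on $M_\Lambda$ by $(xg)_n=x_ng_n$. The set $N_\Lambda$ is the zero set of the hyperkähler moment map $\hat\mu_\Lambda$, given by $\langle\hat\mu_\Lambda(x),\xi\rangle=\sum_n(x_ni\bar x_n-\Lambda_ni\bar\Lambda_n)\xi_n$ for $\xi$ in the Lie algebra $\{\xi\in\mathbb{R}^{\mathbb{Z}}:\sum(1+|\Lambda_n|^2)\xi_n^2<\infty,\ \sum\xi_n=0\}$. *)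

From Stdlib Require Import Reals ZArith.
Open Scope R_scope.

(** Quaternions a + b i + c j + d k. *)
Record H : Type := mkH { q0 : R; q1 : R; q2 : R; q3 : R }.

Definition Hadd (x y : H) : H :=
  mkH (q0 x + q0 y) (q1 x + q1 y) (q2 x + q2 y) (q3 x + q3 y).
Definition Hopp (x : H) : H := mkH (- q0 x) (- q1 x) (- q2 x) (- q3 x).
Definition Hsub (x y : H) : H := Hadd x (Hopp y).
Definition Hmul (x y : H) : H :=
  mkH (q0 x * q0 y - q1 x * q1 y - q2 x * q2 y - q3 x * q3 y)
      (q0 x * q1 y + q1 x * q0 y + q2 x * q3 y - q3 x * q2 y)
      (q0 x * q2 y - q1 x * q3 y + q2 x * q0 y + q3 x * q1 y)
      (q0 x * q3 y + q1 x * q2 y - q2 x * q1 y + q3 x * q0 y).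
Definition Hconj (x : H) : H := mkH (q0 x) (- q1 x) (- q2 x) (- q3 x).
Definition H1 : H := mkH 1 0 0 0.
Definition Hi : H := mkH 0 1 0 0.
Definition Hnorm2 (x : H) : R := q0 x ^ 2 + q1 x ^ 2 + q2 x ^ 2 + q3 x ^ 2.

Definition hk (x : H) : H := Hmul (Hmul x Hi) (Hconj x).

(** Convergence of a series of (nonnegative) reals indexed by Z:
    sum_{k>=0} f k + sum_{k>=1} f (-k) converges. *)
Definition Zsummable (f : Z -> R) : Prop :=
  exists l, infinite_sum (fun k => f (Z.of_nat k) + f (Z.opp (Z.of_nat (S k)))) l.

Fixpoint Zpartial_prod (g : Z -> H) (N : nat) : H :=
  match N with
  | O => g 0%Z
  | S N' => Hmul (Hmul (g (Z.opp (Z.of_nat (S N')))) (Zpartial_prod g N'))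
                 (g (Z.of_nat (S N')))
  end.

Definition Zprod_eq_one (g : Z -> H) : Prop :=
  Un_cv (fun N => Hnorm2 (Hsub (Zpartial_prod g N) H1)) 0.

Definition in_S1 (z : H) : Prop := q2 z = 0 /\ q3 z = 0 /\ q0 z ^ 2 + q1 z ^ 2 = 1.

Definition in_M (Lam x : Z -> H) : Prop :=
  Zsummable (fun n => Hnorm2 (Hsub (x n) (Lam n))).

Definition in_G (Lam g : Z -> H) : Prop :=
  (forall n, in_S1 (g n)) /\
  Zsummable (fun n => (1 + Hnorm2 (Lam n)) * Hnorm2 (Hsub H1 (g n))) /\
  Zprod_eq_one g.

Definition in_N (Lam x : Z -> H) : Prop :=
  in_M Lam x /\
  exists c : H, forall n, Hsub (hk (x n)) (hk (Lam n)) = c.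

Definition act (x g : Z -> H) : Z -> H := fun n => Hmul (x n) (g n).

(* If x g = x with g in G_Λ, then g_n = 1 wherever x_n ≠ 0, because the
   quaternions have no zero divisors.  On N_Λ the quantity
   x_n i x̄_n - Λ_n i Λ̄_n is a constant c, so x_n = 0 forces Λ_n i Λ̄_n = -c;
   by genericity this happens for at most one index n.  Then g is 1 off that
   index, its partial products are eventually equal to g_n, and ∏ g = 1 gives
   g_n = 1. *)

From Stdlib Require Import Reals ZArith Lra Lia Psatz.
Open Scope R_scope.

Definition H0 : H := mkH 0 0 0 0.

Lemma Hnorm2_eq0 (x : H) : Hnorm2 x = 0 -> x = H0.
Proof.
  destruct x as [a b c d]; unfold Hnorm2, H0; simpl; intros h.
  f_equal; nra.
Qed.

Lemma Hnorm2_mul (x y : H) : Hnorm2 (Hmul x y) = Hnorm2 x * Hnorm2 y.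
Proof. destruct x, y; unfold Hnorm2, Hmul; simpl; ring. Qed.

Lemma Hsub_eq0 (a b : H) : Hnorm2 (Hsub a b) = 0 -> a = b.
Proof.
  intros h; apply Hnorm2_eq0 in h; revert h.
  destruct a, b; unfold Hsub, Hadd, Hopp, H0; simpl; intros h; injection h; intros.
  f_equal; lra.
Qed.

Lemma Hsub_inj_r (a b d : H) : Hsub a b = Hsub a d -> b = d.
Proof.
  destruct a, b, d; unfold Hsub, Hadd, Hopp; simpl; intros h; injection h; intros.
  f_equal; lra.
Qed.

Lemma Hmul1l (y : H) : Hmul H1 y = y.
Proof. destruct y; unfold Hmul, H1; simpl; f_equal; ring. Qed.

Lemma Hmul1r (y : H) : Hmul y H1 = y.
Proof. destruct y; unfold Hmul, H1; simpl; f_equal; ring. Qed.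

Lemma hk_H0 : hk H0 = H0.
Proof. unfold hk, Hmul, Hconj, Hi, H0; simpl; f_equal; ring. Qed.

(* x (g - 1) = x g - x, and |x (g - 1)|^2 = |x|^2 |g - 1|^2. *)
Lemma Hmul_fixed_r_eq1 (x g : H) : Hnorm2 x <> 0 -> Hmul x g = x -> g = H1.
Proof.
  intros hx hfix.
  assert (hdistr : Hmul x (Hsub g H1) = Hsub (Hmul x g) x).
  { destruct x, g; unfold Hmul, Hsub, Hadd, Hopp, H1; simpl; f_equal; ring. }
  assert (hzero : Hnorm2 x * Hnorm2 (Hsub g H1) = 0).
  { rewrite <- Hnorm2_mul, hdistr, hfix.
    destruct x; unfold Hnorm2, Hsub, Hadd, Hopp; simpl; ring. }
  apply Hsub_eq0.
  destruct (Rmult_integral _ _ hzero); [contradiction | assumption].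
Qed.

Lemma in_N_zero_unique (Lam x : Z -> H)
  (Hgen : forall n m : Z, n <> m -> hk (Lam n) <> hk (Lam m)) :
  in_N Lam x -> forall n m, Hnorm2 (x n) = 0 -> Hnorm2 (x m) = 0 -> n = m.
Proof.
  intros [_ [c hc]] n m hn hm.
  destruct (Z.eq_dec n m) as [e | hnm]; [exact e | exfalso].
  apply (Hgen n m hnm), (Hsub_inj_r H0).
  rewrite <- hk_H0, <- (Hnorm2_eq0 _ hn), hc, (Hnorm2_eq0 _ hn), <- (Hnorm2_eq0 _ hm).
  rewrite hc; reflexivity.
Qed.

Lemma Zpartial_prod_single (g : Z -> H) (n : Z) :
  (forall m, m <> n -> g m = H1) ->
  forall N, Zpartial_prod g N = if Nat.leb (Z.abs_nat n) N then g n else H1.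
Proof.
  intros hg N; induction N as [| N IH].
  - simpl; destruct (Nat.leb_spec (Z.abs_nat n) 0); [f_equal; lia | apply hg; lia].
  - change (Zpartial_prod g (S N))
      with (Hmul (Hmul (g (Z.opp (Z.of_nat (S N)))) (Zpartial_prod g N))
                 (g (Z.of_nat (S N)))).
    rewrite IH.
    destruct (Nat.leb_spec (Z.abs_nat n) N) as [hN | hN],
             (Nat.leb_spec (Z.abs_nat n) (S N)) as [hSN | hSN]; try lia.
    + rewrite (hg (Z.opp (Z.of_nat (S N)))), (hg (Z.of_nat (S N))) by lia.
      rewrite Hmul1l, Hmul1r; reflexivity.
    + rewrite Hmul1r.
      destruct (Z_lt_le_dec n 0).
      * replace (Z.opp (Z.of_nat (S N))) with n by lia.
        rewrite (hg (Z.of_nat (S N))) by lia; apply Hmul1r.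
      * rewrite (hg (Z.opp (Z.of_nat (S N)))) by lia.
        replace (Z.of_nat (S N)) with n by lia; apply Hmul1l.
    + rewrite (hg (Z.opp (Z.of_nat (S N)))), (hg (Z.of_nat (S N))) by lia.
      rewrite !Hmul1l; reflexivity.
Qed.

Lemma Un_cv_eventually_const (u : nat -> R) (l v : R) (K : nat) :
  Un_cv u l -> (forall N, (K <= N)%nat -> u N = v) -> v = l.
Proof.
  intros hcv hconst.
  destruct (Req_dec v l) as [e | hne]; [exact e | exfalso].
  destruct (hcv (Rabs (v - l))) as [N0 hN0].
  { apply Rabs_pos_lt; lra. }
  specialize (hN0 (Nat.max N0 K) ltac:(lia)).
  rewrite hconst in hN0 by lia.
  unfold Rdist in hN0; lra.
Qed.

Lemma Zprod_eq_one_single (g : Z -> H) (n : Z) :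
  (forall m, m <> n -> g m = H1) -> Zprod_eq_one g -> g n = H1.
Proof.
  intros hg hprod.
  apply Hsub_eq0, (Un_cv_eventually_const _ _ _ (Z.abs_nat n) hprod).
  intros N hN.
  rewrite (Zpartial_prod_single g n hg).
  replace (Nat.leb (Z.abs_nat n) N) with true by (symmetry; apply Nat.leb_le, hN).
  reflexivity.
Qed.

Theorem proposition2p4 (Lam : Z -> H)
  (Hsum : Zsummable (fun n => / (1 + Hnorm2 (Lam n))))
  (Hgen : forall n m : Z, n <> m -> hk (Lam n) <> hk (Lam m)) :
  forall (x g : Z -> H), in_N Lam x -> in_G Lam g ->
    act x g = x -> forall n, g n = H1.
Proof.
  intros x g hx [_ [_ hprod]] hact n.
  assert (hfixed : forall m, Hnorm2 (x m) <> 0 -> g m = H1).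
  { intros m hm; apply (Hmul_fixed_r_eq1 (x m)); [exact hm |].
    exact (f_equal (fun f => f m) hact). }
  destruct (Req_dec (Hnorm2 (x n)) 0) as [hn | hn]; [| exact (hfixed n hn)].
  apply (Zprod_eq_one_single g n); [| exact hprod].
  intros m hmn; apply hfixed; intros hm.
  exact (hmn (in_N_zero_unique Lam x Hgen hx m n hm hn)).
Qed.
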